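(* Let $(P_n)_{n\ge 0}$ be the Catalan-Larcombe-French numbers. Then for every prime $p$ and all positive integers $m$ and $r$, $$P_{mp^r}\equiv P_{mp^{r-1}}\pmod{p^r}.$$
   Context: The Catalan-Larcombe-French numbers are defined by $P_0=1$, $P_1=8$ and, for $n\ge 2$, $n^2P_n-8(3n^2-3n+1)P_{n-1}+128(n-1)^2P_{n-2}=0$. Equivalently, $P_n=2^n\sum_{i=0}^{\lfloor n/2\rfloor}(-4)^i\binom{2(n-i)}{n-i}^2\binom{n-i}{i}$ for $n\ge 0$. The first values are $1,8,80,896,10816,137728$. *)

From mathcomp Require Import all_boot all_order all_algebra.
Set Implicit Arguments. Unset Strict Implicit. Unset Printing Implicit Defensive.
Import Order.TTheory GRing.Theory Num.Theory.
Local Open Scope ring_scope.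

Definition CLF (n : nat) : int :=
  2 ^+ n * \sum_(0 <= i < (n./2).+1)
     (-4) ^+ i * ('C((n - i).*2, n - i) ^ 2 * 'C(n - i, i))%N%:Z.

(* Write P_n = 2^n S_n with S_n = sum_k C(n,k) 4^(n-k) a_k, where a_(2j) = C(2j,j)^2
   and a_(2j+1) = 0: both sides satisfy the three-term recurrence of P_n divided by
   powers of 2, which is checked termwise by creative telescoping.  S_n is the
   coefficient of x^n y^n in Q^n with Q = 4xy + (1+x^2)(1+y^2); after the Kronecker
   substitution y = x^K this becomes a coefficient of q^n for an integer polynomial q.
   The Gauss congruence q^(m p^r) = q^(m p^(r-1))(x^p) mod p^r, which follows from
   q^p = q(x^p) mod p by lifting p-th powers, then gives S_(m p^r) = S_(m p^(r-1))
   mod p^r, and 2^(m p^r) = 2^(m p^(r-1)) mod p^r likewise. *)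

From mathcomp Require Import all_boot all_order all_algebra.
From mathcomp Require Import ring zify.
Set Implicit Arguments. Unset Strict Implicit. Unset Printing Implicit Defensive.
Import Order.TTheory GRing.Theory Num.Theory.
Local Open Scope ring_scope.

Section Congruence.
Variable R : comPzRingType.

Definition eqmod (d a b : R) : Prop := exists z, a - b = d * z.

Lemma eqmod_refl d a : eqmod d a a.
Proof. by exists 0; rewrite subrr mulr0. Qed.

Lemma eqmod_trans d a b c : eqmod d a b -> eqmod d b c -> eqmod d a c.
Proof. by case=> z h [w h']; exists (z + w); rewrite mulrDr -h -h' addrA subrK. Qed.

Lemma eqmodD d a b c e : eqmod d a b -> eqmod d c e -> eqmod d (a + c) (b + e).
Proof. by case=> z h [w h']; exists (z + w); rewrite mulrDr -h -h'; ring. Qed.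

Lemma eqmodM d a b c e : eqmod d a b -> eqmod d c e -> eqmod d (a * c) (b * e).
Proof.
case=> z h [w h']; exists (z * c + b * w).
by rewrite mulrDr mulrA -h mulrCA -h'; ring.
Qed.

Lemma eqmodX d a b n : eqmod d a b -> eqmod d (a ^+ n) (b ^+ n).
Proof.
move=> h; elim: n => [|n IH]; first exact: eqmod_refl.
by rewrite !exprS; apply: eqmodM.
Qed.

Lemma eqmod_sum d (I : finType) (F G : I -> R) :
  (forall i, eqmod d (F i) (G i)) -> eqmod d (\sum_i F i) (\sum_i G i).
Proof.
move=> h; elim/big_ind2: _ => //; first exact: eqmod_refl.
by move=> *; apply: eqmodD.
Qed.

Lemma eqmod_expD_prime p x y : prime p ->
  eqmod p%:R ((x + y) ^+ p) (x ^+ p + y ^+ p).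
Proof.
case: p => // p pp; rewrite exprDn big_ord_recr big_ord_recl /=.
rewrite subn0 subnn !expr0 mulr1 mul1r bin0 binn !mulr1n.
pose c (i : 'I_p) := x ^+ (p.+1 - bump 0 i) * y ^+ bump 0 i.
exists (\sum_(i < p) c i *+ ('C(p.+1, bump 0 i) %/ p.+1)).
rewrite mulr_sumr [in RHS](eq_bigr (fun i => c i *+ 'C(p.+1, bump 0 i))); first ring.
move=> i _; rewrite mulr_natl -mulrnA divnK //.
by apply: prime_dvd_bin; rewrite // /bump /= add1n ltnS ltn_ord.
Qed.

(* Writing a^p - b^p = (a - b) * sum_i a^(p-1-i) b^i, the sum is p b^(p-1) modulo p^k. *)
Lemma eqmod_expp p k a b : (0 < k)%N ->
  eqmod (p ^ k)%:R a b -> eqmod (p ^ k.+1)%:R (a ^+ p) (b ^+ p).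
Proof.
case: k => // k _ [z hz].
have [w hw] : eqmod (p ^ k.+1)%:R (\sum_(i < p) a ^+ (p.-1 - i) * b ^+ i)
                                   (p%:R * b ^+ p.-1).
  have -> : p%:R * b ^+ p.-1 = \sum_(i < p) b ^+ (p.-1 - i) * b ^+ i.
    rewrite mulr_natl -[p in _ *+ p]card_ord -sumr_const; apply: eq_bigr => i _.
    by rewrite -exprD subnK // -ltnS (ltn_predK (ltn_ord i)).
  apply: eqmod_sum => i; apply: eqmodM; last exact: eqmod_refl.
  by apply: eqmodX; exists z.
exists (z * b ^+ p.-1 + (p ^ k)%:R * z * w).
rewrite subrXX hz (_ : \sum_(i < p) _ = p%:R * b ^+ p.-1 + (p ^ k.+1)%:R * w).
  by rewrite !natrX !exprS; ring.
by rewrite -hw; ring.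
Qed.

Lemma eqmodX_pexp p r a b :
  eqmod p%:R a b -> eqmod (p ^ r.+1)%:R (a ^+ (p ^ r)) (b ^+ (p ^ r)).
Proof.
move=> h; elim: r => [|r IH]; first by rewrite expn0 expn1 !expr1.
by rewrite [(p ^ r.+1)%N]expnSr !exprM; apply: eqmod_expp.
Qed.

End Congruence.

Lemma eqmod_rmorph (R S : comPzRingType) (f : {rmorphism R -> S}) d a b :
  eqmod d a b -> eqmod (f d) (f a) (f b).
Proof. by case=> z h; exists (f z); rewrite -rmorphB -rmorphM h. Qed.

Lemma eqmod_coef (R : comNzRingType) (d : nat) (P Q : {poly R}) i :
  eqmod d%:R P Q -> eqmod d%:R P`_i Q`_i.
Proof.
by case=> z h; exists z`_i; rewrite -coefB h mulr_natl coefMn mulr_natl.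
Qed.

Lemma eqmod_fermat p (c : int) : prime p -> eqmod (p%:R : int) (c ^+ p) c.
Proof.
move=> pp; have p_gt0 := prime_gt0 pp.
have fermat_nat (n : nat) : eqmod (p%:R : int) (n%:Z ^+ p) n%:Z.
  elim: n => [|n IH]; first by rewrite expr0n eqn0Ngt p_gt0; apply: eqmod_refl.
  rewrite -addn1 PoszD; apply: eqmod_trans (eqmod_expD_prime _ _ pp) _.
  by rewrite expr1n; apply: eqmodD => //; apply: eqmod_refl.
case: c => n; first exact: fermat_nat.
(* For c = -x, expand 0 = (x + c)^p and use Fermat for x. *)
rewrite NegzE; set x := n.+1%:Z.
have [z hz] := eqmod_expD_prime x (- x) pp; have [w hw] := fermat_nat n.+1.
rewrite subrr expr0n eqn0Ngt p_gt0 /= in hz.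
exists (- z - w); have -> : (- x) ^+ p = - (p%:R * z) - x ^+ p by rewrite -hz; ring.
by rewrite mulrBr mulrN -hw; ring.
Qed.

Lemma eqmod_frobenius_poly p (q : {poly int}) : prime p ->
  eqmod (p%:R : {poly int}) (q ^+ p) (q \Po 'X^p).
Proof.
move=> pp; elim/poly_ind: q => [|q c IH].
  by rewrite expr0n eqn0Ngt prime_gt0 // comp_poly0; apply: eqmod_refl.
apply: eqmod_trans (eqmod_expD_prime _ _ pp) _.
rewrite comp_poly_MXaddC; apply: eqmodD.
  by rewrite exprMn; apply: eqmodM => //; apply: eqmod_refl.
rewrite -rmorphXn -(rmorph_nat (@polyC int)).
exact/eqmod_rmorph/eqmod_fermat.
Qed.

Lemma eqmod_gauss_poly p r m (q : {poly int}) : prime p ->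
  eqmod ((p ^ r.+1)%:R : {poly int})
        (q ^+ (m * p ^ r.+1)) ((q ^+ (m * p ^ r)) \Po 'X^p).
Proof.
move=> pp; have -> : (m * p ^ r.+1 = p * p ^ r * m)%N by rewrite expnS mulnC.
rewrite (mulnC m) !exprM !(rmorphXn (comp_poly 'X^p)).
by apply: eqmodX; apply: eqmodX_pexp; apply: eqmod_frobenius_poly.
Qed.

Lemma eqmod_gauss_coef p r m (q : {poly int}) i : prime p ->
  eqmod ((p ^ r.+1)%:R : int)
        (q ^+ (m * p ^ r.+1))`_(i * p) (q ^+ (m * p ^ r))`_i.
Proof.
move=> pp; have := eqmod_coef (i * p) (eqmod_gauss_poly r m q pp).
by rewrite coef_comp_poly_Xn ?prime_gt0 // dvdn_mull // mulnK ?prime_gt0.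
Qed.

Definition cbin2 (j : nat) : nat := ('C(j.*2, j) ^ 2)%N.

Definition cbin2_even (k : nat) : nat := if odd k then 0%N else cbin2 k./2.

Definition clf_scaled (n : nat) : int :=
  \sum_(k < n.+1) ('C(n, k) * 4 ^ (n - k) * cbin2_even k)%N%:Z.

(* With y = 'X^K, the coefficient of x^n y^n in (4 x y + (1 + x^2) (1 + y^2))^n
   is clf_scaled n, and for K > 2 n it is read off at 'X^(n * K.+1). *)
Definition kron_clf (K : nat) : {poly int} :=
  4%:P * 'X^(K.+1) + (1 + 'X^2) * ((1 + 'X^2) \Po 'X^K).

Lemma coef_1addX_exp (R : nzRingType) n j : ((1 + 'X : {poly R}) ^+ n)`_j = 'C(n, j)%:R.
Proof.
elim: n j => [|n IH] j; first by rewrite expr0 coef1 bin0n; case: (j == 0%N).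
rewrite exprSr mulrDr mulr1 coefD coefMX IH.
by case: j => [|j]; rewrite ?bin0 ?addr0 //= IH binS natrD addrC.
Qed.

Lemma coef_1addX2_exp (R : comNzRingType) n :
  ((1 + 'X^2 : {poly R}) ^+ n)`_n = (if odd n then 0 else 'C(n, n./2))%:R.
Proof.
have -> : 1 + 'X^2 = (1 + 'X : {poly R}) \Po 'X^2.
  by rewrite comp_polyD comp_polyC comp_polyX.
rewrite -rmorphXn coef_comp_poly_Xn // dvdn2 divn2 coef_1addX_exp.
by case: (odd n).
Qed.

Lemma size_1addX2_exp n : (size ((1 + 'X^2 : {poly int}) ^+ n) <= n.*2.+1)%N.
Proof.
have := size_exp (1 + 'X^2 : {poly int}) n.
by rewrite addrC -polyC1 size_XnaddC // -muln2 mulnC => <-; apply: leqSpred.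
Qed.

Lemma coef_kronecker (R : comNzRingType) (K a b : nat) (P B : {poly R}) :
  (a < K)%N -> (forall i, (K <= i)%N -> P`_i = 0) ->
  (P * (B \Po 'X^K))`_(a + K * b) = P`_a * B`_b.
Proof.
move=> aK hP; elim/poly_ind: B b => [|B c IH] b.
  by rewrite comp_poly0 mulr0 !coef0 mulr0.
rewrite comp_poly_MXaddC mulrDr mulrA coefD coefMXn coefMC coefD coefMX coefC.
case: b => [|b]; first by rewrite muln0 addn0 aK eqxx !add0r.
rewrite /= ltnNge (leq_trans (leq_addl a K)) ?leq_add2l ?leq_pmulr //=.
have -> : (a + K * b.+1 - K = a + K * b)%N by rewrite mulnS addnCA addKn.
by rewrite IH (hP (a + K * b.+1)%N) ?mul0r ?addr0 //; nia.
Qed.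

Lemma coef_kron_clf_exp K n : (n.*2 < K)%N ->
  (kron_clf K ^+ n)`_(n * K.+1) = clf_scaled n.
Proof.
move=> hK; rewrite /kron_clf exprDn coef_sum /clf_scaled; apply: eq_bigr => i _.
have hi : (i <= n)%N by rewrite -ltnS.
rewrite coefMn !exprMn -exprM -(rmorphXn (comp_poly 'X^K)) /=.
rewrite -(rmorphXn (@polyC int)) /= -!mulrA coefCM coefXnM ifF; last first.
  by apply/negbTE; rewrite -leqNgt; nia.
have -> : (n * K.+1 - K.+1 * (n - i) = i + K * i)%N by nia.
rewrite coef_kronecker; first last.
- move=> j hj; apply: nth_default; apply: leq_trans (size_1addX2_exp i) _; nia.
- nia.
rewrite coef_1addX2_exp -natz !natrM !natrX /cbin2_even /cbin2.
case: ifP => [_|/negbT/even_halfK ei]; first by rewrite !mulr0 mul0rn.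
by rewrite [in RHS]ei natrX -mulr_natl; ring.
Qed.

Lemma eqmod_clf_scaled p r m : prime p ->
  eqmod ((p ^ r.+1)%:R : int) (clf_scaled (m * p ^ r.+1)) (clf_scaled (m * p ^ r)).
Proof.
move=> pp; set N := (m * p ^ r.+1)%N; set M := (m * p ^ r)%N.
have eN : N = (M * p)%N by rewrite /N /M expnSr mulnA.
have hM : (M.*2 < N.*2.+1)%N by rewrite ltnS leq_double eN leq_pmulr ?prime_gt0.
rewrite -(coef_kron_clf_exp (ltnSn N.*2)) -(coef_kron_clf_exp hM).
have -> : (N * N.*2.+2 = M * N.*2.+2 * p)%N by rewrite eN mulnAC.
exact: eqmod_gauss_coef.
Qed.

Lemma natr1_neq0 (m : nat) : m%:R + 1 != 0 :> rat.
Proof. by rewrite natr1 pnatr_eq0. Qed.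

Lemma natr2_neq0 (m : nat) : m%:R + 2 != 0 :> rat.
Proof. by have := natr1_neq0 m.+1; rewrite -natr1 -addrA. Qed.

Lemma mul_bin_left_rat (m k : nat) :
  (k%:R + 1) * 'C(m, k.+1)%:R = (m%:R - k%:R) * 'C(m, k)%:R :> rat.
Proof.
have [h|h] := leqP k m; first by rewrite natr1 -(natrB _ h) -!natrM mul_bin_left.
by rewrite (bin_small h) (bin_small (leqW h)) !mulr0.
Qed.

Lemma mul_bin_diag_rat (m k : nat) :
  (k%:R + 1) * 'C(m.+1, k.+1)%:R = (m%:R + 1) * 'C(m, k)%:R :> rat.
Proof. by rewrite !natr1 -!natrM -mul_bin_diag. Qed.

Lemma mul_bin_down_rat (m k : nat) :
  (m%:R + 1) * 'C(m, k)%:R = (m%:R + 1 - k%:R) * 'C(m.+1, k)%:R :> rat.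
Proof.
have [h|h] := leqP k m.+1; first by rewrite natr1 -(natrB _ h) -!natrM -mul_bin_down.
by rewrite (bin_small h) (bin_small (ltnW h)) !mulr0.
Qed.

Lemma binS_rat (m k : nat) : 'C(m.+1, k.+1)%:R = 'C(m, k)%:R + 'C(m, k.+1)%:R :> rat.
Proof. by rewrite binS natrD addrC. Qed.

Lemma mul_bin_center_succ (j : nat) :
  (j%:R + 1) * 'C(j.*2.+2, j.+1)%:R = 2 * (2 * j%:R + 1) * 'C(j.*2, j)%:R :> rat.
Proof.
rewrite binS_rat.
have -> : 'C(j.*2.+1, j) = 'C(j.*2.+1, j.+1).
  by rewrite -bin_sub; [congr 'C(_, _)|]; rewrite -addnn; lia.
have := mul_bin_diag_rat j.*2 j; rewrite -muln2 natrM => e.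
by rewrite mulrDr e; ring.
Qed.

Lemma cbin2_succ (j : nat) :
  (j%:R + 1) ^+ 2 * (cbin2 j.+1)%:R = 4 * (2 * j%:R + 1) ^+ 2 * (cbin2 j)%:R :> rat.
Proof. by rewrite /cbin2 !natrX doubleS -exprMn mul_bin_center_succ; ring. Qed.

Lemma cbin2_even_succ2 (k : nat) :
  (k%:R + 2) ^+ 2 * (cbin2_even k.+2)%:R = 16 * (k%:R + 1) ^+ 2 * (cbin2_even k)%:R :> rat.
Proof.
rewrite /cbin2_even /= negbK; case: ifP => [_|/negbT/even_halfK ek]; first by rewrite !mulr0.
have e2 : k%:R = 2 * (k./2)%:R :> rat by rewrite -{1}ek -muln2 natrM mulrC.
rewrite e2; set j := k./2.
transitivity (4 * ((j%:R + 1) ^+ 2 * (cbin2 j.+1)%:R) : rat); first by ring.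
by rewrite cbin2_succ; ring.
Qed.

(* The recurrence of P_n, rewritten for u_n = P_n / 2^n and shifted by two. *)
Definition clf_op (u : nat -> rat) (n : nat) : rat :=
  (n%:R + 2) ^+ 2 * u n.+2 - 4 * (3 * n%:R ^+ 2 + 9 * n%:R + 7) * u n.+1
  + 32 * (n%:R + 1) ^+ 2 * u n.

Lemma clf_op_sum (N : nat) (F : 'I_N -> nat -> rat) n :
  clf_op (fun m => \sum_(i < N) F i m) n = \sum_(i < N) clf_op (F i) n.
Proof. by rewrite /clf_op !mulr_sumr -sumrB -big_split. Qed.

Lemma clf_op_eq0_ext (u v : nat -> rat) :
  (forall n, clf_op u n = 0) -> (forall n, clf_op v n = 0) ->
  u 0%N = v 0%N -> u 1%N = v 1%N -> forall n, u n = v n.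
Proof.
move=> hu hv h0 h1.
suff H n : u n = v n /\ u n.+1 = v n.+1 by move=> n; case: (H n).
elim: n => [|n [IH1 IH2]] //; split=> //.
have hn : (n%:R + 2) ^+ 2 != 0 :> rat by rewrite expf_neq0 // natr2_neq0.
have : clf_op u n - clf_op v n = 0 by rewrite hu hv subrr.
rewrite /clf_op IH1 IH2 => e.
by apply: (mulfI hn); apply/eqP; rewrite -subr_eq0; apply/eqP; rewrite -e; ring.
Qed.

Lemma telescope2_sum (V : zmodType) (F g : nat -> V) :
  (forall k, F k = g k - (if k is k'.+2 then g k' else 0)) ->
  forall N, \sum_(k < N.+2) F k = g N.+1 + g N.
Proof.
move=> hF; elim=> [|N IH]; first by rewrite !big_ord_recr big_ord0 /= !hF /= !subr0 add0r addrC.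
by rewrite big_ord_recr /= IH hF addrCA addrK.
Qed.

Definition clf_term (n j : nat) : rat :=
  if (j <= n)%N then (-4) ^+ (n - j) * ('C(j, n - j) * cbin2 j)%:R else 0.

Definition clf_sum (n : nat) : rat := \sum_(j < n.+1) clf_term n j.

Lemma clf_termE n j : (j <= n)%N ->
  clf_term n j = (-4) ^+ (n - j) * 'C(j, n - j)%:R * (cbin2 j)%:R.
Proof. by move=> h; rewrite /clf_term h natrM mulrA. Qed.

Lemma clf_term_small n j : (n < j)%N -> clf_term n j = 0.
Proof. by move=> h; rewrite /clf_term leqNgt h. Qed.

(* Zeilberger certificate: clf_op (clf_term^~ j) telescopes in j. *)
Definition clf_cert (n j : nat) : rat := - (n%:R + 2) * j%:R * clf_term n.+2 j.

Lemma clf_op_term_le j k :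
  clf_op (clf_term^~ j) (j + k) = clf_cert (j + k) j.+1 - clf_cert (j + k) j.
Proof.
rewrite /clf_op /clf_cert !clf_termE; try lia.
have -> : ((j + k).+2 - j = k.+2)%N by lia.
have -> : ((j + k).+1 - j = k.+1)%N by lia.
have -> : ((j + k) - j = k)%N by lia.
have -> : ((j + k).+2 - j.+1 = k.+1)%N by lia.
have c1 : 'C(j, k.+1)%:R = (j%:R - k%:R) * 'C(j, k)%:R / (k%:R + 1) :> rat.
  by rewrite -mul_bin_left_rat; field; rewrite natr1_neq0.
have c2 : 'C(j, k.+2)%:R = (j%:R - (k%:R + 1)) * 'C(j, k.+1)%:R / (k%:R + 2) :> rat.
  rewrite natr1 -mul_bin_left_rat -natr1; field.
  exact: natr2_neq0.
have c3 : 'C(j.+1, k.+1)%:R = (j%:R + 1) * 'C(j, k)%:R / (k%:R + 1) :> rat.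
  by rewrite -mul_bin_diag_rat; field; rewrite natr1_neq0.
have d1 : (cbin2 j.+1)%:R = 4 * (2 * j%:R + 1) ^+ 2 * (cbin2 j)%:R / (j%:R + 1) ^+ 2 :> rat.
  by rewrite -cbin2_succ; field; rewrite natr1_neq0.
rewrite c2 c1 c3 d1 !natrD -!natr1 !exprS !expr0.
by field; rewrite !natr1_neq0 !natr2_neq0.
Qed.

Lemma clf_op_term n j :
  clf_op (clf_term^~ j) n = clf_cert n j.+1 - clf_cert n j.
Proof.
have [hj|] := leqP j n; first by rewrite -(subnKC hj) clf_op_term_le.
rewrite /clf_op /clf_cert leq_eqVlt => /orP[/eqP <-|].
  rewrite (clf_term_small (ltnSn n)) !clf_termE // subSn // subnn subnn.
  have d : (cbin2 n.+2)%:R =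
      4 * (2 * n.+1%:R + 1) ^+ 2 * (cbin2 n.+1)%:R / (n.+1%:R + 1) ^+ 2 :> rat.
    by rewrite -cbin2_succ; field; rewrite nat1r natr1_neq0.
  rewrite bin1 bin0 d -!natr1 !expr0 expr1.
  by field; rewrite -addrA natr2_neq0.
rewrite leq_eqVlt => /orP[/eqP <-|hj].
  rewrite (clf_term_small (ltnSn n.+1)) (clf_term_small (ltnW (ltnSn n.+1))).
  rewrite (clf_term_small (ltnSn n.+2)) clf_termE // subnn bin0 expr0.
  by rewrite !mulr0 mul1r; ring.
by rewrite !clf_term_small ?mulr0 ?subrr ?addr0 //; lia.
Qed.

Lemma sumr_ord_pad (V : zmodType) (F : nat -> V) m N :
  (m <= N)%N -> (forall j, (m <= j)%N -> F j = 0) ->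
  \sum_(j < m) F j = \sum_(j < N) F j.
Proof.
move=> hmN hF; rewrite (big_ord_widen _ _ hmN) big_mkcond; apply: eq_bigr => j _.
by case: ifP => // /negbT; rewrite -leqNgt => /hF ->.
Qed.

Lemma clf_sum_rec n : clf_op clf_sum n = 0.
Proof.
have pad m : (m <= n.+2)%N -> clf_sum m = \sum_(j < n.+3) clf_term m j.
  by move=> hm; apply: sumr_ord_pad => // j hj; apply: clf_term_small.
transitivity (clf_op (fun m => \sum_(j < n.+3) clf_term m j) n).
  by rewrite /clf_op !pad //; lia.
rewrite (clf_op_sum (fun j m => clf_term m j)); under eq_bigr do rewrite clf_op_term.
rewrite -(big_mkord xpredT (fun j => clf_cert n j.+1 - clf_cert n j)) telescope_sumr //.
by rewrite /clf_cert clf_term_small // !mulr0 mul0r subrr.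
Qed.

Definition scaled_term (n k : nat) : rat := ('C(n, k) * 4 ^ (n - k) * cbin2_even k)%N%:R.

Definition scaled_sum (n : nat) : rat := \sum_(k < n.+1) scaled_term n k.

Lemma scaled_termE m k :
  scaled_term m k = 'C(m, k)%:R * 4 ^+ m * (cbin2_even k)%:R / 4 ^+ k.
Proof.
rewrite /scaled_term; have [h|h] := leqP k m; last by rewrite bin_small ?mul0r.
rewrite !natrM natrX -[in 4 ^+ m](subnK h) exprD; field.
by rewrite expf_neq0.
Qed.

(* Zeilberger certificate: clf_op (scaled_term^~ k) telescopes in k with step 2. *)
Definition scaled_cert (n k : nat) : rat :=
  -4 * (k%:R + 1) * (n%:R + 1 - k%:R) * scaled_term n.+1 k.

Lemma clf_op_scaled_term n k :
  clf_op (scaled_term^~ k) n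
  = scaled_cert n k - (if k is k'.+2 then scaled_cert n k' else 0).
Proof.
rewrite /clf_op /scaled_cert; case: k => [|[|k]].
- by rewrite !scaled_termE /cbin2_even /= !bin0 !exprS !expr0; field.
- by rewrite /scaled_term /cbin2_even /= !muln0 !mulr0 subrr; ring.
rewrite !scaled_termE.
have a2 : (cbin2_even k.+2)%:R =
    16 * (k%:R + 1) ^+ 2 * (cbin2_even k)%:R / (k%:R + 2) ^+ 2 :> rat.
  by rewrite -cbin2_even_succ2; field; rewrite natr2_neq0.
have b1 : 'C(n.+2, k.+2)%:R = (n%:R + 2) * 'C(n.+1, k.+1)%:R / (k%:R + 2) :> rat.
  have := mul_bin_diag_rat n.+1 k.+1; rewrite -!natr1 -!addrA => e.
  by rewrite -e; field; rewrite natr2_neq0.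
have b2 : 'C(n.+1, k.+1)%:R = (n%:R + 1) * 'C(n, k)%:R / (k%:R + 1) :> rat.
  by rewrite -mul_bin_diag_rat; field; rewrite natr1_neq0.
have b4 : 'C(n, k.+2)%:R = (n%:R - (k%:R + 1)) * 'C(n, k.+1)%:R / (k%:R + 2) :> rat.
  have := mul_bin_left_rat n k.+1; rewrite -!natr1 -!addrA => e.
  by rewrite -e; field; rewrite natr2_neq0.
have b5 : 'C(n, k.+1)%:R = (n%:R - k%:R) * 'C(n, k)%:R / (k%:R + 1) :> rat.
  by rewrite -mul_bin_left_rat; field; rewrite natr1_neq0.
have b6 : 'C(n, k)%:R = (n%:R + 1 - k%:R) * 'C(n.+1, k)%:R / (n%:R + 1) :> rat.
  by rewrite -mul_bin_down_rat; field; rewrite natr1_neq0.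
rewrite a2 b1 (binS_rat n k.+1) b4 b2 !b5 !b6 -!natr1 !exprS.
by field; rewrite !natr1_neq0 natr2_neq0 expf_neq0.
Qed.

Lemma scaled_sum_rec n : clf_op scaled_sum n = 0.
Proof.
have pad m : (m <= n.+2)%N -> scaled_sum m = \sum_(k < n.+3) scaled_term m k.
  by move=> hm; apply: sumr_ord_pad => // k hk; rewrite /scaled_term bin_small.
transitivity (clf_op (fun m => \sum_(k < n.+3) scaled_term m k) n).
  by rewrite /clf_op !pad //; lia.
rewrite (clf_op_sum (fun k m => scaled_term m k)); under eq_bigr do rewrite clf_op_scaled_term.
rewrite (@telescope2_sum _ (fun k => scaled_cert n k -
  (if k is k'.+2 then scaled_cert n k' else 0)) (scaled_cert n)) //.
by rewrite /scaled_cert /scaled_term bin_small // !mul0n mulr0 add0r [n%:R + 1]natr1 subrr mulr0 mul0r.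
Qed.

Lemma clf_sum_scaled n : clf_sum n = scaled_sum n.
Proof.
apply: clf_op_eq0_ext; [exact: clf_sum_rec | exact: scaled_sum_rec | |].
- by rewrite /clf_sum /scaled_sum !big_ord_recr !big_ord0.
- by rewrite /clf_sum /scaled_sum !big_ord_recr !big_ord0 /= /clf_term /scaled_term; vm_compute.
Qed.

Lemma clf_scaledE n : (clf_scaled n)%:~R = scaled_sum n.
Proof. by rewrite rmorph_sum. Qed.

Lemma CLF_clf_sum n : (CLF n)%:~R = 2 ^+ n * clf_sum n :> rat.
Proof.
rewrite /CLF rmorphM rmorphXn rmorph_sum /=; congr (_ * _).
rewrite /clf_sum -(big_mkord xpredT (clf_term n)) [RHS]big_nat_rev /=.
have hh : (n./2.+1 <= n.+1)%N by rewrite ltnS -divn2 leq_div.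
rewrite [RHS](big_cat_nat _ (n := n./2.+1)) //= [X in _ = _ + X]big_nat_cond.
rewrite [X in _ = _ + X]big1 ?addr0 => [|i /andP[/andP[hi1 hi2] _]]; last first.
  rewrite add0n subSS clf_termE ?leq_subr // bin_small ?mulr0 ?mul0r //.
  by have := odd_double_half n; move: hi1 hi2; rewrite -!muln2; nia.
apply: eq_big_nat => i /andP[_ hi].
rewrite add0n subSS clf_termE ?leq_subr // subKn; last first.
  by have := odd_double_half n; move: hi; rewrite -!muln2; nia.
by rewrite rmorphM rmorphXn /= !natrM; ring.
Qed.

Lemma CLF_scaled n : CLF n = 2 ^+ n * clf_scaled n.
Proof.
apply: (@intr_inj rat).
by rewrite CLF_clf_sum rmorphM rmorphXn /= clf_sum_scaled clf_scaledE.
Qed.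

Lemma eqmod_gauss_int p r m (c : int) : prime p ->
  eqmod ((p ^ r.+1)%:R : int) (c ^+ (m * p ^ r.+1)) (c ^+ (m * p ^ r)).
Proof.
move=> pp; have -> : (m * p ^ r.+1 = p * p ^ r * m)%N by rewrite expnS mulnC.
by rewrite (mulnC m) !exprM; apply: eqmodX; apply: eqmodX_pexp; apply: eqmod_fermat.
Qed.

Lemma eqmod_modz (d a b : int) : eqmod d a b -> (a = b %[mod d])%Z.
Proof. by case=> z h; apply/eqP; rewrite eqz_mod_dvd h dvdz_mulr. Qed.

Theorem theorem3 (p m r : nat) :
  prime p -> (0 < m)%N -> (0 < r)%N ->
  (CLF (m * p ^ r) = CLF (m * p ^ r.-1) %[mod (p ^ r)%N%:Z])%Z.
Proof.
(* The congruence also holds for m = 0. *)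
move=> pp _; case: r => // r _; apply: eqmod_modz.
rewrite -natz !CLF_scaled; apply: eqmodM.
- exact: eqmod_gauss_int.
- exact: eqmod_clf_scaled.
Qed.
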